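(* Let $n \geq 5$ and let $T_0$ be a forest of $K_n$ that is not $6$-star-like. Then at least $e^{-4} n^{n-2}$ of the spanning trees $T$ of $K_n$ avoid $T_0$ (share no edge with $T_0$); in particular $|\mathcal{T}_n[T_0;\emptyset]| \geq e^{-4} n^{n-2}$.
   Context: A forest $T$ of $K_n$ is $d$-star-like if it has an edge that is incident to (shares an endpoint with) at least $(n-1)/d$ other edges of $T$. $\mathcal{T}_n$ is the set of labelled spanning trees of $K_n$, identified with edge sets, and $\mathcal{T}_n[T_0;\emptyset]=\{T\in\mathcal{T}_n : T\cap T_0=\emptyset\}$. *)

From mathcomp Require Import all_boot.
From Stdlib Require Import Reals.

Set Implicit Arguments.
Unset Strict Implicit.
Unset Printing Implicit Defensive.

(* Vertices of K_n are 'I_n; an edge of K_n is a 2-element subset of 'I_n;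
   an edge set (subgraph of K_n) is a set of such edges. *)
Definition edge_set (n : nat) := {set {set 'I_n}}.

Definition is_edge_set n (F : edge_set n) : Prop :=
  forall e, e \in F -> #|e| = 2.

Definition adj n (F : edge_set n) : rel 'I_n :=
  fun x y => (x != y) && ([set x; y] \in F).

Definition has_cycle n (F : edge_set n) : Prop :=
  exists s : seq 'I_n, 3 <= size s /\ ucycle (adj F) s.

Definition forest n (F : edge_set n) : Prop :=
  is_edge_set F /\ ~ has_cycle F.

Definition connected_es n (F : edge_set n) : Prop :=
  forall x y : 'I_n, connect (adj F) x y.

Definition spanning_tree n (T : edge_set n) : Prop :=
  forest T /\ connected_es T.

Definition star_like n (d : nat) (T : edge_set n) : Prop :=
  exists2 e, e \in T &
    (((INR n - 1) / INR d)%R <=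
       INR #|[set f in T | (f != e) && ~~ [disjoint e & f]]|)%R.

From mathcomp Require Import all_boot.
From Stdlib Require Import Reals Lra.
From mathcomp Require Import zify.

Set Implicit Arguments.
Unset Strict Implicit.
Unset Printing Implicit Defensive.

(* Spanning trees avoiding [T0] arise from a grafting process: start from the [n]
   one-vertex rooted trees and, [n - 1] times, hang a root [w] below a vertex [u] of
   another tree, provided [wu] is not an edge of [T0].  Let [Phi] be the number of
   [T0]-edges from roots to other trees.  From a forest of [k + 1] trees at least
   [n ^ k * exp (- 2 Phi / n)] final parent functions arise.  Indeed every outcome
   has at most [k + 1] possible first moves; a move [(w, u)] lowers [Phi] by at least
   [x + y], where [x] counts the [T0]-edges leaving [w] and [y] those from the root
   of [u] into the tree of [w], so that [1 + t <= exp t] turns the induction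
   hypothesis into a bound proportional to [n + 2 x + 2 y]; and these weights sum to
   at least [(k + 1) n ^ 2] over all moves, because all [T0]-degrees are at most
   [n / 4] when [T0] is not 6-star-like.  Initially [Phi = 2 |T0| < 2 n], and each
   tree comes from at most [n] parent functions, one for each choice of its root. *)

Lemma eq_set2_cases (T : finType) (a b c d : T) : a != b ->
  [set a; b] = [set c; d] -> (a = c /\ b = d) \/ (a = d /\ b = c).
Proof.
move=> ab E.
have : a \in [set c; d] by rewrite -E set21.
have : b \in [set c; d] by rewrite -E set22.
rewrite !inE => /orP[] /eqP hb /orP[] /eqP ha; subst; rewrite ?eqxx in ab; by [left | right].
Qed.

Lemma next_neq_prev (T : eqType) (s : seq T) x : uniq s -> 3 <= size s -> x \in s ->
  next s x != prev s x.
Proof.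
move=> us ss xs; apply/eqP => E.
have : next s (next s x) = x by rewrite E next_prev.
case: (rot_to xs) => i s' Hr.
have us' : uniq (x :: s') by rewrite -Hr rot_uniq.
have ss' : 3 <= size (x :: s') by rewrite -Hr size_rot.
rewrite -!(next_rot i us) Hr.
case: s' us' ss' {Hr} => [|y [|z r]] //= us' _.
move: us'; rewrite !inE !negb_or => /andP[/andP[xy /andP[xz _]] _].
rewrite /next /= eqxx eq_sym (negbTE xy) eqxx => /eqP.
by rewrite eq_sym (negbTE xz).
Qed.

Lemma double_count_le (I J : finType) (A : {set I}) (f : I -> {set J}) (B : {set J}) c :
  (forall i, i \in A -> f i \subset B) ->
  (forall j, j \in B -> #|[set i in A | j \in f i]| <= c) ->
  \sum_(i in A) #|f i| <= c * #|B|.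
Proof.
move=> fB Bc.
have card_sum (K : finType) (X : {set K}) : #|X| = \sum_k (k \in X : nat).
  by rewrite -sum1_card big_mkcond; apply: eq_bigr => k _; case: (k \in X).
under eq_bigr do rewrite card_sum.
rewrite exchange_big (card_sum _ B) big_distrr /=; apply: leq_sum => j _.
have -> : \sum_(i in A) (j \in f i : nat) = #|[set i in A | j \in f i]|.
  by rewrite card_sum big_mkcond; apply: eq_bigr => i _; rewrite !inE; case: (i \in A).
case: (boolP (j \in B)) => jB; first by rewrite muln1 Bc.
rewrite muln0 leqn0 cards_eq0; apply/eqP/setP => i; rewrite !inE.
by apply/negbTE/andP => -[/fB /subsetP sB /sB]; rewrite (negbTE jB).
Qed.

Definition roots_of (T : finType) (r : T -> T) := [set v | r v == v].

Section RootMaps.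
Variables (T : finType) (r : T -> T).
Hypothesis rK : forall v, r (r v) = r v.

Lemma mem_roots_of v : r v \in roots_of r.
Proof. by rewrite inE rK. Qed.

Lemma sum_over_roots v (F : T -> nat) :
  \sum_(w in roots_of r) ((r v == w) * F w) = F (r v).
Proof.
rewrite (bigD1 (r v)) ?mem_roots_of //= eqxx mul1n big1 ?addn0 // => w /andP[_ wv].
by rewrite eq_sym (negbTE wv).
Qed.

(* [r] maps each vertex to the root of its component; [unite x y] is the map
   obtained when the component of the root [x] joins that of [y]. *)
Definition unite (x y : T) v := if r v == x then r y else r v.

Variables x y : T.
Hypotheses (rx : r x = x) (ryx : r y != x).

Lemma uniteK v : unite x y (unite x y v) = unite x y v.
Proof.
rewrite /unite; have [rvx|rvx] := eqVneq (r v) x; first by rewrite rK (negbTE ryx).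
by rewrite rK (negbTE rvx).
Qed.

Lemma unite_fixE v : (unite x y v == v) = (r v == v) && (v != x).
Proof.
rewrite /unite; have [->|vx] := eqVneq v x; first by rewrite rx eqxx andbF; apply/negbTE.
have [rvx|rvx] //= := eqVneq (r v) x; last by rewrite andbT.
have -> : (r v == v) = false by rewrite rvx eq_sym (negbTE vx).
by apply/negbTE/eqP => yv; case/eqP: ryx; rewrite -rvx -yv rK.
Qed.

Lemma roots_of_unite : roots_of (unite x y) = roots_of r :\ x.
Proof. by apply/setP => v; rewrite !inE unite_fixE andbC. Qed.

Lemma card_roots_of_unite : #|roots_of (unite x y)| = #|roots_of r|.-1.
Proof.
by rewrite roots_of_unite (cardsD1 x (roots_of r)) inE rx eqxx.
Qed.

End RootMaps.

Lemma INR_leq (a b : nat) : a <= b -> (INR a <= INR b)%R.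
Proof. by move=> /leP; apply: le_INR. Qed.

Lemma sum_INR_scale_le (I : finType) (A : {set I}) (f g : I -> nat) (c : R) :
  (forall i, i \in A -> c * INR (f i) <= INR (g i))%R ->
  (c * INR (\sum_(i in A) f i) <= INR (\sum_(i in A) g i))%R.
Proof.
move=> fg; apply: (big_ind2 (fun a b => c * INR a <= INR b)%R) => //=.
- by rewrite Rmult_0_r; apply: Rle_refl.
- by move=> a b a' b' h1 h2; rewrite !plus_INR; lra.
Qed.

Lemma exp_le (a b : R) : (a <= b)%R -> (exp a <= exp b)%R.
Proof. by case/Rle_lt_or_eq_dec => [/exp_increasing/Rlt_le // | ->]; apply: Rle_refl. Qed.

(* Uses [1 + x <= exp x] with [x = 2 d / N]. *)
Lemma exp_potential_step (N P P' d : R) : (0 < N)%R -> (P' + d <= P)%R ->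
  (exp (- (2 * P / N)) * ((N + 2 * d) / N) <= exp (- (2 * P' / N)))%R.
Proof.
move=> N0 PP.
have -> : ((N + 2 * d) / N = 1 + 2 * d / N)%R by field; lra.
apply: (Rle_trans _ (exp (- (2 * P / N)) * exp (2 * d / N))).
  by apply: Rmult_le_compat_l; [apply/Rlt_le/exp_pos | apply: exp_ineq1_le].
rewrite -exp_plus; apply: exp_le.
have : (2 * (P - P' - d) / N >= 0)%R.
  by apply/Rle_ge/Rmult_le_pos; [lra | apply/Rlt_le/Rinv_0_lt_compat].
have -> : (- (2 * P' / N) = - (2 * P / N) + 2 * d / N + 2 * (P - P' - d) / N)%R by field; lra.
lra.
Qed.

Lemma lt_of_not_div_le (a m d : nat) : 0 < d ->
  ~ ((INR m - 1) / INR d <= INR a)%R -> d * a + 1 < m.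
Proof.
move=> d0 /Rnot_le_lt lt_am; have D0 : (0 < INR d)%R by apply: lt_0_INR; apply/ltP.
apply/ltP/INR_lt; rewrite plus_INR mult_INR /=.
have := Rmult_lt_compat_l _ _ _ D0 lt_am.
have -> : (INR d * ((INR m - 1) / INR d) = INR m - 1)%R by field; lra.
lra.
Qed.

Lemma exp_potential_bound (N p c : R) (m : nat) : (0 < N)%R -> (0 <= p <= 2 * N)%R ->
  (N ^ m.+1 * exp (- (2 * p / N)) <= c * N)%R -> (exp (-4) * N ^ m <= c)%R.
Proof.
move=> N0 p_bd le_c; have Nm := pow_lt _ m N0.
have e4 : (exp (-4) <= exp (- (2 * p / N)))%R.
  apply: exp_le; suff : (2 * p / N <= 4)%R by lra.
  apply: (Rmult_le_reg_l N) => //.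
  have -> : (N * (2 * p / N) = 2 * p)%R by field; lra.
  lra.
apply: (Rmult_le_reg_r N) => //; apply: Rle_trans le_c.
have -> : (exp (-4) * N ^ m * N = N * N ^ m * exp (-4))%R by ring.
by apply: Rmult_le_compat_l => //; apply/Rlt_le/Rmult_lt_0_compat.
Qed.

Section Graphs.
Variable n : nat.
Implicit Types (F E : edge_set n).

Lemma adj_sym F : symmetric (adj F).
Proof. by move=> x y; rewrite /adj eq_sym setUC. Qed.

Lemma connect_adjC F x y : connect (adj F) x y = connect (adj F) y x.
Proof. exact: (sym_connect_sym (adj_sym F)). Qed.

Lemma adj_subset F E : F \subset E -> subrel (adj F) (adj E).
Proof. by move=> sFE x y; rewrite /adj => /andP[-> /(subsetP sFE) ->]. Qed.

Lemma connect_subset F E : F \subset E -> subrel (connect (adj F)) (connect (adj E)).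
Proof. by move=> sFE; apply: connect_sub => x y /(adj_subset sFE); apply: connect1. Qed.

Lemma connect_cycle F E a b : F \subset E -> a != b -> connect (adj F) a b ->
  [set a; b] \notin F -> [set a; b] \in E -> has_cycle E.
Proof.
move=> sFE ab /connectP[p pth bE] nF abE; subst b; move: ab nF abE.
case: (shortenP pth) => p' pth' up' _ {pth} ab nF abE.
exists (a :: p'); split.
  case: p' pth' up' ab nF {abE} => [|c [|d r]] //=; first by rewrite eqxx.
  by rewrite andbT => /andP[_ ->].
rewrite /ucycle up' andbT /cycle rcons_path (sub_path (adj_subset sFE) pth') /=.
by rewrite /adj eq_sym ab setUC.
Qed.

Definition parent_edges (P : {ffun 'I_n -> 'I_n}) : edge_set n :=
  [set [set v; P v] | v in [set v | P v != v]].

Lemma parent_edgesP (P : {ffun 'I_n -> 'I_n}) e :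
  reflect (exists2 v, P v != v & e = [set v; P v]) (e \in parent_edges P).
Proof.
by apply: (iffP imsetP) => [[v] | [v]]; rewrite ?inE => H1 H2; exists v; rewrite ?inE.
Qed.

Section Descending.
Variables (P : {ffun 'I_n -> 'I_n}) (h : 'I_n -> nat).
Hypothesis hP : forall v, P v != v -> h (P v) < h v.

Lemma adj_parent_edges a b : adj (parent_edges P) a b -> h b <= h a -> P a = b.
Proof.
rewrite /adj => /andP[ab /parent_edgesP[v Pv E]] hab.
case: (eq_set2_cases ab E) => [[<- <-] //|[Ea Eb]]; subst.
by have := hP Pv; rewrite ltnNge hab.
Qed.

(* On a cycle, the vertex of maximal [h] would have both cycle neighbours as parent. *)
Lemma parent_edges_acyclic : ~ has_cycle (parent_edges P).
Proof.
move=> [s [ss /andP[cs us]]]; case: s ss cs us => [//|x0 s] ss cs us.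
have x0s : x0 \in x0 :: s by rewrite inE eqxx.
case: (arg_maxnP h (P := fun i => i \in x0 :: s) x0s) => x xs xmax.
have h1 : P x = next (x0 :: s) x.
  by apply: adj_parent_edges; [apply: next_cycle | apply: xmax; rewrite mem_next].
have h2 : P x = prev (x0 :: s) x.
  apply: adj_parent_edges; last by apply: xmax; rewrite mem_prev.
  by rewrite adj_sym; apply: prev_cycle.
by have := next_neq_prev us ss xs; rewrite -h1 -h2 eqxx.
Qed.

(* Induction on [h]: if [Q x <> P x] then [x] must be [Q (P x)], and then
   [P (P x) = x] by induction, contradicting the descent of [h]. *)
Lemma parent_edges_inj (Q : {ffun 'I_n -> 'I_n}) :
  roots_of P = roots_of Q -> parent_edges P = parent_edges Q -> P = Q.
Proof.
move=> rPQ ePQ; apply/ffunP => x; elim: {x}(h x).+1 {-2}x (ltnSn (h x)) => // k IH x hx.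
have [Px|Px] := eqVneq (P x) x.
  have : x \in roots_of Q by rewrite -rPQ inE Px.
  by rewrite inE Px => /eqP.
have : [set x; P x] \in parent_edges Q by rewrite -ePQ; apply/parent_edgesP; exists x.
case/parent_edgesP => y Qy E; have xPx : x != P x by rewrite eq_sym.
have [[<- <-] // | [xQy yPx]] := eq_set2_cases xPx E.
have hy : h y < k by rewrite -yPx; have := hP Px; lia.
have PPx : P (P x) = x by rewrite yPx (IH y hy) -xQy.
have := hP Px; have := hP (v := P x); rewrite PPx => /(_ xPx); lia.
Qed.

End Descending.

(* Each edge of a forest joins two distinct components, as it would otherwise close a cycle. *)
Lemma forest_components (T0 : edge_set n) F : forest T0 -> F \subset T0 ->
  exists r : 'I_n -> 'I_n, [/\ forall v, r (r v) = r v,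
    forall x y, r x = r y -> connect (adj F) x y & #|F| + #|roots_of r| <= n].
Proof.
move=> fT0; elim: {F}#|F| {-2}F (erefl #|F|) => [|k IH] F cF sF.
  exists (fun v => v); split=> // [x y -> | ]; first exact: connect0.
  by rewrite cF add0n -[X in _ <= X]card_ord max_card.
have /card_gt0P[e eF] : 0 < #|F| by rewrite cF.
have sF' : F :\ e \subset T0 by apply: subset_trans sF; apply: subD1set.
have [|r [rK rC rN]] := IH (F :\ e) _ sF'; first by move: cF; rewrite (cardsD1 e) eF => -[].
have /cards2P[a [b [ab Ee]]] : #|e| == 2 by rewrite fT0.1 ?(subsetP sF).
subst e; have sFF : F :\ [set a; b] \subset F by apply: subD1set.
have [rab | rab] := eqVneq (r a) (r b).
  by case: fT0.2; apply: (connect_cycle sF' ab (rC _ _ rab)); rewrite ?setD11 ?(subsetP sF).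
have rba : r b != r a by rewrite eq_sym.
exists (unite r (r a) b); split.
- exact: (uniteK rK rba).
- have Cab : connect (adj F) a b by apply: connect1; rewrite /adj ab eF.
  have CF u v : r u = r v -> connect (adj F) u v by move/rC/(connect_subset sFF).
  move=> u v; rewrite /unite.
  have [ua|ua] := eqVneq (r u) (r a); have [va|va] := eqVneq (r v) (r a).
  + by move=> _; apply: CF; rewrite ua va.
  + move=> bv; apply: (connect_trans (CF u a ua)); apply: (connect_trans Cab).
    exact: CF.
  + move=> ub; apply: (connect_trans (CF u b ub)); apply: (connect_trans (y := a)).
      by rewrite connect_adjC.
    by apply: CF; rewrite va.
  + exact: CF.
- rewrite (card_roots_of_unite rK (rK a) rba) (cardsD1 [set a; b] F) eF add1n.
  have : 0 < #|roots_of r| by apply/card_gt0P; exists (r a); apply: (mem_roots_of rK).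
  by move: rN; case: #|roots_of r| => //= m rN _; rewrite addSn -addnS.
Qed.

Lemma forest_card_lt (T0 : edge_set n) : forest T0 -> 0 < n -> #|T0| < n.
Proof.
move=> fT0 n0; have [r [rK _ N]] := forest_components fT0 (subxx T0).
have : 0 < #|roots_of r| by apply/card_gt0P; exists (r (Ordinal n0)); apply: (mem_roots_of rK).
lia.
Qed.

End Graphs.

Section Grafting.
Variables (n : nat) (T0 : edge_set n).

(* [depth] only certifies that [parent] is acyclic. *)
Record pforest := PForest {
  croot : 'I_n -> 'I_n;
  parent : {ffun 'I_n -> 'I_n};
  depth : 'I_n -> nat }.

Record wf (S : pforest) : Prop := {
  crootK : forall v, croot S (croot S v) = croot S v;
  parent_fixE : forall v, (parent S v == v) = (croot S v == v);
  croot_parent : forall v, croot S (parent S v) = croot S v;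
  depth_parent : forall v, parent S v != v -> depth S (parent S v) < depth S v;
  connect_croot : forall v, connect (adj (parent_edges (parent S))) v (croot S v);
  parent_edge_notin : forall v, parent S v != v -> [set v; parent S v] \notin T0 }.

Definition good (r : 'I_n -> 'I_n) w u := (r u != w) && ~~ adj T0 w u.

Definition moves S : {set 'I_n * 'I_n} :=
  [set m | (croot S m.1 == m.1) && good (croot S) m.1 m.2].

Definition graft S (m : 'I_n * 'I_n) :=
  PForest (unite (croot S) m.1 m.2)
    [ffun v => if v == m.1 then m.2 else parent S v]
    (fun v => if croot S v == m.1 then depth S v + depth S m.2 + 1 else depth S v).

Fixpoint outcomes k S : {set {ffun 'I_n -> 'I_n}} :=
  if k is k'.+1 then \bigcup_(m in moves S) outcomes k' (graft S m) else [set parent S].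

Definition nroots S := #|roots_of (croot S)|.

Section Graft.
Variables (S : pforest) (m : 'I_n * 'I_n).
Hypotheses (wfS : wf S) (mS : m \in moves S).
Local Notation w := m.1.
Local Notation u := m.2.

Lemma moveP : [/\ croot S w = w, croot S u != w, u != w & [set w; u] \notin T0].
Proof.
move: mS; rewrite inE /good /adj => /and3P[/eqP rw ruw].
have uw : u != w by apply: contra ruw => /eqP ->; rewrite rw.
by rewrite eq_sym uw.
Qed.

Lemma roots_of_graft : roots_of (croot (graft S m)) = roots_of (croot S) :\ w.
Proof. by case: moveP => rw ruw _ _; apply: roots_of_unite => //; apply: crootK. Qed.

Lemma nroots_graft : nroots (graft S m) = (nroots S).-1.
Proof.
by case: moveP => rw ruw _ _; apply: card_roots_of_unite => //; apply: crootK.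
Qed.

Lemma parent_graft v : parent S v != v -> parent (graft S m) v = parent S v.
Proof.
case: moveP => rw _ _ _ pv; rewrite ffunE; case: eqP => // vw.
by move: pv; rewrite parent_fixE // vw rw eqxx.
Qed.

Lemma parent_edges_graft : parent_edges (parent S) \subset parent_edges (parent (graft S m)).
Proof.
apply/subsetP => e /parent_edgesP[v pv ->]; apply/parent_edgesP.
by exists v; rewrite parent_graft.
Qed.

Lemma graft_wf : wf (graft S m).
Proof.
case: moveP => rw ruw uw wuT; have rK := crootK wfS.
split=> [v | v | v | v | v | v]; rewrite /graft /= ?ffunE.
- exact: uniteK.
- rewrite unite_fixE // -parent_fixE //.
  by case: (eqVneq v w) => [->|]; rewrite ?eqxx ?andbT ?andbF ?(negbTE uw).
- rewrite /unite; case: (eqVneq v w) => [->|vw]; first by rewrite rw eqxx (negbTE ruw).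
  by rewrite croot_parent.
- case: (eqVneq v w) => [-> _|vw pv]; first by rewrite rw eqxx (negbTE ruw); lia.
  by rewrite croot_parent //; have := depth_parent wfS pv; case: ifP => _; lia.
- have lift := connect_subset parent_edges_graft.
  rewrite /unite; case: eqVneq => [rv|_]; last exact/lift/connect_croot.
  apply: (connect_trans (y := w)); first by rewrite -{2}rv; apply/lift/connect_croot.
  apply: (connect_trans (y := u)); last exact/lift/connect_croot.
  apply: connect1; rewrite /adj eq_sym uw /=; apply/parent_edgesP.
  by exists w; rewrite ffunE eqxx.
- by case: (eqVneq v w) => [-> _|_]; last apply: parent_edge_notin.
Qed.

End Graft.

Lemma outcomesP k S P : wf S -> nroots S = k.+1 -> P \in outcomes k S ->
  exists2 S', wf S' & [/\ parent S' = P, nroots S' = 1,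
    forall v, parent S v != v -> P v = parent S v &
    forall v, croot S' v == v -> croot S v == v].
Proof.
elim: k S => [|k IH] S wfS nS /=; first by rewrite inE => /eqP ->; exists S.
case/bigcupP => m mS /IH [||S' wfS' [<- nS' eP rS']]; first exact: graft_wf.
  by rewrite nroots_graft // nS.
exists S' => //; split=> // v; first by move=> pv; rewrite eP parent_graft.
case: (moveP mS) => rw ruw _ _.
by move/rS'; rewrite /= (unite_fixE (crootK wfS) rw ruw) => /andP[].
Qed.

Definition singletons := PForest (fun v : 'I_n => v) [ffun v => v] (fun _ => 0).

Lemma singletons_wf : wf singletons.
Proof. by split=> v; rewrite /= ?ffunE ?eqxx. Qed.

Lemma nroots_singletons : nroots singletons = n.
Proof. by rewrite /nroots -[RHS]card_ord; apply: eq_card => v; rewrite inE eqxx. Qed.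

Lemma wf_spanning_tree S : wf S -> nroots S = 1 ->
  spanning_tree (parent_edges (parent S)) /\ [disjoint parent_edges (parent S) & T0].
Proof.
move=> wfS /eqP/cards1P[r rootsS].
have rootE v : croot S v = r.
  by apply/set1P; rewrite -rootsS inE (crootK wfS).
split; first split; first split.
- by move=> e /parent_edgesP[v pv ->]; rewrite cards2 eq_sym pv.
- exact: (parent_edges_acyclic (depth_parent wfS)).
- move=> x y; apply: (connect_trans (y := r)); first by rewrite -(rootE x) (connect_croot wfS).
  by rewrite connect_adjC -(rootE y) (connect_croot wfS).
- rewrite disjoint_subset; apply/subsetP => e /parent_edgesP[v pv ->].
  by rewrite inE; apply: parent_edge_notin.
Qed.

(* An outcome is determined by its edge set together with its root. *)
Lemma card_outcomes_le k S : wf S -> nroots S = k.+1 ->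
  #|outcomes k S| <= #|[set parent_edges P | P in outcomes k S]| * n.
Proof.
move=> wfS nS; set O := outcomes k S.
have wfO P : P \in O -> exists2 S', wf S' & parent S' = P /\ nroots S' = 1.
  by case/(outcomesP wfS nS) => S' wfS' [<- nS' _ _]; exists S'.
have rootsO P : P \in O -> roots_of P \in [set [set r] | r : 'I_n].
  case/wfO=> S' wfS' [<- /eqP/cards1P[r rootsS']]; apply/imsetP; exists r => //.
  by rewrite -rootsS'; apply/setP => v; rewrite !inE (parent_fixE wfS').
pose f (P : {ffun 'I_n -> 'I_n}) := (parent_edges P, roots_of P).
have injf : {in O &, injective f}.
  move=> P Q /wfO[S' wfS' [<- _]] _ [eE rE].
  exact: (parent_edges_inj (depth_parent wfS')).
rewrite -(card_in_imset injf) -[n in _ * n]card_ord.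
apply: (leq_trans _ (leq_mul (leqnn _) (leq_imset_card (fun r : 'I_n => [set r]) _))).
rewrite -cardsX; apply/subset_leq_card/subsetP => _ /imsetP[P PO ->].
by rewrite inE /= (imset_f _ PO) rootsO.
Qed.

End Grafting.

Section Counting.
Variables (n : nat) (T0 : edge_set n).
Implicit Types (r : 'I_n -> 'I_n) (w u z : 'I_n).
Local Notation good := (good T0).

Definition deg0 w := \sum_z (adj T0 w z : nat).
Definition csize r w := \sum_u (r u == w : nat).
Definition outdeg r w := \sum_z (adj T0 w z && (r z != w) : nat).
Definition ngood r w := \sum_u (good r w u : nat).
Definition crossdeg r w u := \sum_z (adj T0 (r u) z && (r z == w) : nat).

Lemma sum_pred_nat_const (P : pred 'I_n) c :
  \sum_(u | P u) c = (\sum_u (P u : nat)) * c.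
Proof.
by rewrite big_mkcond big_distrl; apply: eq_bigr => u _; case: (P u) => /=; rewrite ?mul1n.
Qed.

Lemma sum_deg0_le : \sum_w deg0 w <= 2 * #|T0|.
Proof.
have -> : \sum_w deg0 w = \sum_(p : 'I_n * 'I_n | adj T0 p.1 p.2) 1.
  by rewrite pair_bigA [RHS]big_mkcond /=; apply: eq_bigr => -[w z] _; case: adj.
rewrite (partition_big (fun p => [set p.1; p.2]) (mem T0)) => [|p /andP[] //].
rewrite mulnC -sum_nat_const; apply: leq_sum => e eT; rewrite sum1dep_card.
case: (set_0Vmem [set p | adj T0 p.1 p.2 && ([set p.1; p.2] == e)]) => [-> | [[a b]]].
  by rewrite cards0.
rewrite inE => /andP[/andP[ab _] /eqP <-].
apply: (@leq_trans #|[set (a, b); (b, a)]|); last by rewrite cards2; case: (_ != _).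
apply/subset_leq_card/subsetP => -[c d]; rewrite !inE /= => /andP[/andP[cd _] /eqP E].
by case: (eq_set2_cases cd E) => -[-> ->]; rewrite eqxx ?orbT.
Qed.

(* All T0-edges at [w] meet a fixed one [w -- z0], so a large degree makes [T0] star-like. *)
Lemma not_star_like_deg0 : 5 <= n -> ~ star_like 6 T0 -> forall w, 4 * deg0 w <= n.
Proof.
move=> n5 nstar w.
have -> : deg0 w = #|[set z | adj T0 w z]|.
  by rewrite -sum1_card big_mkcond; apply: eq_bigr => z _; rewrite inE; case: adj.
set N := [set z | adj T0 w z].
have [->|[z0 z0N]] := set_0Vmem N; first by rewrite cards0.
have /andP[wz0 eT] : adj T0 w z0 by rewrite inE in z0N.
set A := [set f in T0 | (f != [set w; z0]) && ~~ [disjoint [set w; z0] & f]].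
have injN : {in N :\ z0 &, injective (fun z => [set w; z])}.
  move=> z1 z2; rewrite !inE => /andP[_ /andP[wz1 _]] _ E.
  by have [[_ ->] | [-> ->]] := eq_set2_cases wz1 E.
have NA : #|N :\ z0| <= #|A|.
  rewrite -(card_in_imset injN); apply/subset_leq_card/subsetP => _ /imsetP[z + ->].
  rewrite !inE => /andP[zz0 /andP[wz zT]]; rewrite zT /=; apply/andP; split.
    by apply: contra zz0 => /eqP/setP/(_ z); rewrite !inE eqxx orbT eq_sym (negbTE wz).
  by apply/negP => /disjointFr/(_ (set21 w z0)); rewrite set21.
have := @lt_of_not_div_le #|A| n 6 isT (fun H => nstar (ex_intro2 _ _ [set w; z0] eT H)).
by move: NA; rewrite (cardsD1 z0 N) z0N; lia.
Qed.

Section Components.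
Variable r : 'I_n -> 'I_n.
Hypothesis rK : forall v, r (r v) = r v.

Lemma ngood_outdeg_csize w : ngood r w + outdeg r w + csize r w = n.
Proof.
rewrite -!big_split /= -[RHS]card_ord -sum1_card; apply: eq_bigr => u _.
by rewrite /good; case: eqVneq; rewrite ?andbF ?andbT //=; case: adj.
Qed.

Lemma sum_csize_mul (F : 'I_n -> nat) :
  \sum_(w in roots_of r) csize r w * F w = \sum_u F (r u).
Proof.
under eq_bigr do rewrite /csize big_distrl.
by rewrite exchange_big; apply: eq_bigr => u _; apply: sum_over_roots.
Qed.

Lemma sum_csize : \sum_(w in roots_of r) csize r w = n.
Proof.
transitivity (\sum_(u : 'I_n) 1); last by rewrite sum1_card card_ord.
by rewrite -(sum_csize_mul (fun => 1)); apply: eq_bigr => w _; rewrite muln1.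
Qed.

Variable D : nat.
Hypothesis deg0_le : forall w, deg0 w <= D.

Lemma outdeg_le w : outdeg r w <= D.
Proof. by apply: leq_trans (deg0_le w); apply: leq_sum => z _; case: adj => //; rewrite leq_b1. Qed.

Lemma sum_outdeg_csize_le :
  \sum_(w in roots_of r) outdeg r w * csize r w <=
  \sum_(w in roots_of r) \sum_(u | good r w u) crossdeg r w u +
  D * \sum_(w in roots_of r) outdeg r w.
Proof.
pose bad z u := adj T0 (r u) z && good r (r z) u.
have -> : \sum_(w in roots_of r) \sum_(u | good r w u) crossdeg r w u =
    \sum_u \sum_z bad z u.
  under eq_bigr do rewrite big_mkcond /=.
  rewrite exchange_big; apply: eq_bigr => u _.
  transitivity (\sum_(w in roots_of r) \sum_z ((r z == w) * (adj T0 (r u) z && good r w u))).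
    apply: eq_bigr => w _; rewrite /crossdeg; case: good; last first.
      by rewrite big1 // => z _; rewrite andbF muln0.
    by apply: eq_bigr => z _; case: eqP; case: adj.
  by rewrite exchange_big; apply: eq_bigr => z _; apply: sum_over_roots.
have -> : \sum_u \sum_z bad z u =
    \sum_(w in roots_of r) \sum_z \sum_u ((r u == w) * bad z u).
  rewrite exchange_big [RHS]exchange_big; apply: eq_bigr => z _ /=.
  by rewrite exchange_big; apply: eq_bigr => u _; rewrite (sum_over_roots rK u (fun => bad z u)).
rewrite big_distrr -big_split /=; apply: leq_sum => w _.
rewrite /csize /outdeg big_distrl big_distrr -big_split /=; apply: leq_sum => z _.
rewrite big_distrr /=.
(* A T0-edge [w -- z] leaving the tree of [u] (rooted at [w]) is either counted by [bad z u]
   or followed by a T0-edge [r z -- u]; there are at most [D] such [u] for each [z]. *)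
apply: (@leq_trans (\sum_u ((r u == w) * bad z u +
    (adj T0 w z && (r z != w)) * adj T0 (r z) u))).
  apply: leq_sum => u _; case: (eqVneq (r u) w) => [<-|_]; last by rewrite muln0.
  rewrite /bad /good muln1 mul1n eq_sym.
  by case: adj; case: eqVneq; case: adj.
rewrite big_split leq_add2l -big_distrr /= mulnC leq_mul2r.
by case: adj => //=; case: eqVneq => //= _; apply: deg0_le.
Qed.

Hypothesis four_D_le : 4 * D <= n.

(* The [outdeg r w] moves missing at the root [w] are paid for by the extra weight
   [2 outdeg + 2 crossdeg] of the others; this needs [4 D <= n]. *)
Lemma sum_good_weight_ge :
  (#|roots_of r| - 1) * n * n <=
  \sum_(w in roots_of r) \sum_(u | good r w u) (n + 2 * outdeg r w + 2 * crossdeg r w u).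
Proof.
have -> : (#|roots_of r| - 1) * n = \sum_(w in roots_of r) (ngood r w + outdeg r w).
  have E : \sum_(w in roots_of r) (ngood r w + outdeg r w) + n = #|roots_of r| * n.
    rewrite -[X in _ + X = _]sum_csize -big_split -sum_nat_const.
    by apply: eq_bigr => w _; apply: ngood_outdeg_csize.
  by rewrite mulnBl mul1n -E addnK.
have pointwise w : n * (ngood r w + outdeg r w) + 2 * D * outdeg r w <=
    ngood r w * (n + 2 * outdeg r w) + 2 * (outdeg r w * csize r w).
  have := ngood_outdeg_csize w; have := outdeg_le w.
  set g := ngood r w; set x := outdeg r w; set t := csize r w => x_le gxt.
  have : x * (x + 2 * D) <= x * (g + t) by apply: leq_mul => //; lia.
  nia.
have S1 : n * \sum_(w in roots_of r) (ngood r w + outdeg r w) +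
    2 * D * \sum_(w in roots_of r) outdeg r w <=
    \sum_(w in roots_of r) ngood r w * (n + 2 * outdeg r w) +
    2 * \sum_(w in roots_of r) outdeg r w * csize r w.
  by rewrite !big_distrr -!big_split; apply: leq_sum => w _; apply: pointwise.
have -> : \sum_(w in roots_of r) \sum_(u | good r w u) (n + 2 * outdeg r w + 2 * crossdeg r w u) =
    \sum_(w in roots_of r) ngood r w * (n + 2 * outdeg r w) +
    2 * \sum_(w in roots_of r) \sum_(u | good r w u) crossdeg r w u.
  rewrite [X in _ = _ + X]big_distrr -big_split; apply: eq_bigr => w _.
  by rewrite big_split sum_pred_nat_const -big_distrr.
have S2 := sum_outdeg_csize_le.
rewrite -mulnA mulnC in S1; lia.
Qed.

End Components.
End Counting.

Section Potential.
Variables (n : nat) (T0 : edge_set n).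
Local Notation moves := (moves T0).
Local Notation outcomes := (outcomes T0).
Local Notation wf := (wf T0).

Definition potential S := \sum_(w in roots_of (croot S)) outdeg T0 (croot S) w.

Lemma potential_singletons_le : potential (singletons n) <= 2 * #|T0|.
Proof.
apply: leq_trans (sum_deg0_le T0); rewrite /potential big_mkcond /=.
apply: leq_sum => w _; rewrite inE eqxx; apply: leq_sum => z _.
by case: adj; rewrite ?leq_b1.
Qed.

Lemma potential_graft S m : wf S -> m \in moves S ->
  potential (graft S m) + outdeg T0 (croot S) m.1 + crossdeg T0 (croot S) m.1 m.2
    <= potential S.
Proof.
move=> wfS mS; case: (moveP mS) => rw ruw _ _.
rewrite /potential (roots_of_graft wfS mS) [X in _ <= X](big_setD1 m.1) ?inE ?rw //=.
set r := croot S; set rho := r m.2; set r' := unite r m.1 m.2.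
have rK : forall v, r (r v) = r v := crootK wfS.
have rho_in : rho \in roots_of r :\ m.1 by rewrite !inE ruw /rho rK eqxx.
rewrite !(big_setD1 rho rho_in).
have out_rho : outdeg T0 r' rho + crossdeg T0 r m.1 m.2 <= outdeg T0 r rho.
  rewrite /outdeg /crossdeg -big_split; apply: leq_sum => z _; rewrite /r' /unite -/rho.
  case: (eqVneq (r z) m.1) => [->|_] /=; last by rewrite andbF addn0.
  by rewrite eqxx andbF andbT eq_sym ruw andbT.
have out_other : \sum_(i in roots_of r :\ m.1 :\ rho) outdeg T0 r' i <=
    \sum_(i in roots_of r :\ m.1 :\ rho) outdeg T0 r i.
  apply: leq_sum => i; rewrite !inE => /and3P[irho iw _]; apply: leq_sum => z _.
  by rewrite /r' /unite; case: (eqVneq (r z) m.1) => [->|//]; rewrite -/rho !(eq_sym _ i) irho iw.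
(* [lia] does not see through the monoid structures left by [big_setD1]. *)
have arith (a' s' x y a s : nat) : a' + y <= a -> s' <= s -> a' + s' + x + y <= x + (a + s).
  by lia.
exact: arith out_rho out_other.
Qed.

Lemma outcome_parent_move k S m P : wf S -> m \in moves S ->
  nroots (graft S m) = k.+1 -> P \in outcomes k (graft S m) -> P m.1 = m.2.
Proof.
move=> wfS mS nSm /(outcomesP (graft_wf wfS mS) nSm) [S' _ [<- _ eP _]].
by case: (moveP mS) => _ _ uw _; rewrite eP /= ffunE eqxx.
Qed.

(* A first move leading to [P] is determined by its root [m.1], which is a root
   of [S] other than the root of [P]. *)
Lemma card_moves_to_outcome k S P : wf S -> nroots S = k.+2 -> P \in outcomes k.+1 S ->
  #|[set m in moves S | P \in outcomes k (graft S m)]| <= k.+1.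
Proof.
move=> wfS nS PO; have [S' wfS' [<- nS' _ rS']] := outcomesP wfS nS PO.
have [r rootsS'] : exists r, roots_of (croot S') = [set r] by apply/cards1P/eqP.
have rr : croot S' r == r by have := set11 r; rewrite -rootsS' inE.
set A := [set m in moves S | _].
have PA m : m \in A -> parent S' m.1 = m.2.
  rewrite inE => /andP[mS]; apply: (outcome_parent_move wfS mS).
  by rewrite (nroots_graft wfS mS) nS.
have injA : {in A &, injective (fun m : 'I_n * 'I_n => m.1)}.
  by move=> [a b] [c d] /PA /= Pab /PA /= Pcd ac; rewrite -Pab -Pcd ac.
rewrite -(card_in_imset injA); apply: (@leq_trans #|roots_of (croot S) :\ r|).
  apply/subset_leq_card/subsetP => _ /imsetP[m mA ->].
  have mS : m \in moves S by move: mA; rewrite inE => /andP[].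
  have [rw _ uw _] := moveP mS.
  rewrite !inE rw eqxx andbT; apply: contra uw => /eqP wr.
  by rewrite -(PA m mA) wr (parent_fixE wfS').
have rS : r \in roots_of (croot S) by rewrite inE rS'.
by move: nS; rewrite /nroots (cardsD1 r) rS add1n => -[->].
Qed.

Lemma sum_card_outcomes_graft_le k S : wf S -> nroots S = k.+2 ->
  \sum_(m in moves S) #|outcomes k (graft S m)| <= k.+1 * #|outcomes k.+1 S|.
Proof.
move=> wfS nS; apply: double_count_le => [m mS | P]; last exact: card_moves_to_outcome.
exact: (bigcup_sup m mS).
Qed.

End Potential.

Section Bound.
Variables (n : nat) (T0 : edge_set n) (D : nat).
Hypotheses (deg0_le : forall w, deg0 T0 w <= D) (four_D_le : 4 * D <= n) (n_gt0 : 0 < n).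
Local Notation moves := (moves T0).
Local Notation outcomes := (outcomes T0).
Local Notation wf := (wf T0).
Local Notation potential := (potential T0).

Lemma sum_moves S (F : 'I_n * 'I_n -> nat) : \sum_(m in moves S) F m =
  \sum_(w in roots_of (croot S)) \sum_(u | good T0 (croot S) w u) F (w, u).
Proof. by rewrite pair_big_dep; apply: eq_big => -[w u]; rewrite ?inE. Qed.

Lemma card_outcomes_ge k S : wf S -> nroots S = k.+1 ->
  (INR n ^ k * exp (- (2 * INR (potential S) / INR n)) <= INR #|outcomes k S|)%R.
Proof.
have N0 : (0 < INR n)%R by apply: lt_0_INR; apply/ltP.
elim: k S => [|k IH] S wfS nS.
  rewrite cards1 /= Rmult_1_l -exp_0; apply: exp_le.
  have : (0 <= 2 * INR (potential S) / INR n)%R.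
    by apply: Rmult_le_pos; [have := pos_INR (potential S); lra | apply/Rlt_le/Rinv_0_lt_compat].
  lra.
set N := INR n in N0 *; set e := exp _.
set weight := fun m : 'I_n * 'I_n =>
  n + 2 * outdeg T0 (croot S) m.1 + 2 * crossdeg T0 (croot S) m.1 m.2.
have per_move m : m \in moves S ->
    (N ^ k * e / N * INR (weight m) <= INR #|outcomes k (graft S m)|)%R.
  move=> mS; apply: Rle_trans (IH _ (graft_wf wfS mS) _); last by rewrite (nroots_graft wfS mS) nS.
  have PP : (INR (potential (graft S m)) +
      INR (outdeg T0 (croot S) m.1 + crossdeg T0 (croot S) m.1 m.2) <= INR (potential S))%R.
    rewrite -plus_INR; apply: INR_leq.
    exact: leq_trans (eq_leq (addnA _ _ _)) (potential_graft wfS mS).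
  have := exp_potential_step N0 PP.
  rewrite /weight !plus_INR /= => step.
  have Nk0 := pow_lt _ k N0.
  apply: Rle_trans (Rmult_le_compat_l _ _ _ (Rlt_le _ _ Nk0) step) => /=.
  by apply: Req_le; rewrite /e -/N; field; lra.
have S1 := sum_INR_scale_le per_move.
have S2 := INR_leq (sum_card_outcomes_graft_le wfS nS).
have K := INR_leq (sum_good_weight_ge (crootK wfS) deg0_le four_D_le).
rewrite -(sum_moves S weight) -/(nroots S) nS subSS in K.
have c0 : (0 <= N ^ k * e / N)%R.
  apply/Rlt_le/Rmult_lt_0_compat; last exact: Rinv_0_lt_compat.
  by apply: Rmult_lt_0_compat; [apply: pow_lt | apply: exp_pos].
have := Rmult_le_compat_l _ _ _ c0 K; rewrite !mult_INR -/N => K'.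
rewrite mult_INR in S2.
have k0 : (0 < INR k.+1)%R by apply: lt_0_INR; apply/ltP.
apply: (Rmult_le_reg_l _ _ _ k0); apply: Rle_trans S2; apply: Rle_trans S1.
apply: Rle_trans K'; apply: Req_le; rewrite /=; field; lra.
Qed.

End Bound.

Theorem lemma3p5 (n : nat) (T0 : edge_set n) :
  5 <= n -> forest T0 -> ~ star_like 6 T0 ->
  exists S : {set edge_set n},
    (forall T, T \in S -> spanning_tree T /\ [disjoint T & T0]) /\
    (exp (-4) * INR n ^ (n - 2) <= INR #|S|)%R.
Proof.
move=> n5 fT0 nstar; have n_gt0 : 0 < n by lia.
have wf0 := singletons_wf T0.
have n0 : nroots (singletons n) = (n - 1).+1 by rewrite nroots_singletons; lia.
exists [set parent_edges P | P in outcomes T0 (n - 1) (singletons n)]; split.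
  move=> _ /imsetP[P /(outcomesP wf0 n0)[S wfS [<- nS _ _]] ->].
  exact: wf_spanning_tree.
have deg0_le w : deg0 T0 w <= n %/ 4 by rewrite leq_divRL // mulnC not_star_like_deg0.
have four_D_le : 4 * (n %/ 4) <= n by rewrite mulnC leq_divM.
have lower := card_outcomes_ge deg0_le four_D_le n_gt0 wf0 n0.
have upper := INR_leq (card_outcomes_le wf0 n0); rewrite mult_INR in upper.
have pot : potential T0 (singletons n) <= 2 * n.
  apply: leq_trans (potential_singletons_le T0) _.
  by rewrite leq_mul2l ltnW ?orbT // forest_card_lt.
apply: (exp_potential_bound (p := INR (potential T0 (singletons n)))).
- by apply: lt_0_INR; apply/ltP.
- by split; [apply: pos_INR | have := INR_leq pot; rewrite mult_INR].
- have -> : (n - 2).+1 = n - 1 by lia.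
  exact: Rle_trans lower upper.
Qed.
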